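(* For every two absolutely continuous probability measures $\mu,\nu$ on $\mathbb R$, there exist random variables $X,Y$ on a common probability space, distributed $\mu$ and $\nu$ respectively, such that $X-Y$ is almost surely a rational number. *)

From HB Require Import structures.
From mathcomp Require Import all_boot all_order all_algebra.
From mathcomp Require Import all_classical all_reals all_analysis.
Set Implicit Arguments. Unset Strict Implicit. Unset Printing Implicit Defensive.

From HB Require Import structures.
From mathcomp Require Import all_boot all_order all_algebra.
From mathcomp Require Import all_classical all_reals all_analysis.
From mathcomp Require Import measurable_realfun lebesgue_integral_differentiation.
From mathcomp Require Import lra.
Import Order.TTheory GRing.Theory Num.Theory.
Import numFieldNormedType.Exports.
Local Open Scope classical_set_scope.
Local Open Scope ring_scope.

(* Write mu = f dx and nu = g dx, and let (s n) enumerate the rationals.  At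
   step n, move greedily the mass min (f_n x) (g_n (x - s n)) from every x to
   x - s n, where f_n and g_n are the parts of f and g not transported yet.
   The resulting plan is carried by the lines x - y = s n, and its marginals
   are f and g as soon as nothing is left over.  Both leftovers have the same
   mass; were it positive, Lebesgue's density theorem would give a rational q
   and a point x where the leftovers of f at x and of g at x - q are both
   positive, although the step transporting along q exhausted one of them. *)

Section nonneg_integral.
Context {d : measure_display} {T : measurableType d} {R : realType}.
Variable mu : {measure set T -> \bar R}.
Local Open Scope ereal_scope.

Lemma measurable_set_gt0 (phi : T -> R) : measurable_fun [set: T] phi ->
  measurable [set x | (0 < phi x)%R].
Proof.
move=> mphi; rewrite [X in measurable X](_ : _ = phi @^-1` `]0%R, +oo[).
  by rewrite -[X in measurable X]setTI; exact: mphi.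
by apply/seteqP; split => x /=; rewrite in_itv/= andbT.
Qed.

Lemma integral_gt0_measure_gt0 (phi : T -> R) : measurable_fun [set: T] phi ->
  (forall x, (0 <= phi x)%R) -> 0 < \int[mu]_x (phi x)%:E ->
  0 < mu [set x | (0 < phi x)%R].
Proof.
move=> mphi phi0 ipos; rewrite lt0e measure_ge0 andbT; apply: contraTneq ipos => mu0.
have -> : \int[mu]_x (phi x)%:E = \int[mu]_(x in [set x | 0 < phi x]%R) (phi x)%:E.
  rewrite [RHS]integral_mkcond; apply: eq_integral => x _; rewrite patchE.
  case: ifPn => // /negP; rewrite inE/= => /negP; rewrite -leNgt => phix.
  by have -> : phi x = 0%R by apply/eqP; rewrite eq_le phix phi0.
rewrite null_set_integral ?ltxx//; first exact: measurable_set_gt0.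
by apply/measurable_EFinP; exact: measurable_funTS.
Qed.

Lemma ge0_integral_eq0_restrict (h : T -> \bar R) (A : set T) : measurable A ->
  measurable_fun [set: T] h -> (forall x, 0 <= h x) ->
  \int[mu]_x h x = 0 -> \int[mu]_(x in A) h x = 0.
Proof.
move=> mA mh h0 int0; apply/eqP; rewrite eq_le integral_ge0 ?andbT// -int0.
exact: ge0_subset_integral.
Qed.

End nonneg_integral.

Section translation.
Context {R : realType}.
Local Notation leb := (@lebesgue_measure R).
Local Open Scope ereal_scope.

Lemma measurable_addr (c : R) : measurable_fun [set: R] (fun x : R => x + c)%R.
Proof. exact/measurable_funD/measurable_cst. Qed.

Lemma lebesgue_measure_addr (c : R) (A : set R) : measurable A ->
  leb ((fun x : R => x + c)%R @^-1` A) = leb A.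
Proof.
move=> mA; pose tr : measurableTypeR R -> measurableTypeR R := (fun x : R => x + c)%R.
change (pushforward leb tr A = leb A).
apply/esym/lebesgue_measure_unique => //=; first exact: measurable_addr.
move=> _ _ [[a b]] _ <-; rewrite /pushforward.
have -> : tr @^-1` `]a, b]%classic = `](a - c)%R, (b - c)%R]%classic.
  by apply/seteqP; split => x /=; rewrite !in_itv/= lerBrDr ltrBlDr.
rewrite !lebesgue_measure_itv/= !lte_fin ltrD2r.
by case: ifP => // _; rewrite -!EFinD; congr EFin; lra.
Qed.

Lemma ge0_integral_addr (c : R) (A : set R) (F : R -> \bar R) :
  measurable A -> measurable_fun A F -> (forall x, A x -> 0 <= F x) ->
  \int[leb]_(x in (fun x : R => x + c)%R @^-1` A) F (x + c)%R =
  \int[leb]_(x in A) F x.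
Proof.
move=> mA mF F0; pose tr : measurableTypeR R -> measurableTypeR R := (fun x : R => x + c)%R.
have mtr : measurable_fun [set: measurableTypeR R] tr by exact: measurable_addr.
rewrite [RHS](eq_measure_integral (pushforward leb tr)) //; last first.
  by move=> B mB _; symmetry; exact: lebesgue_measure_addr.
by rewrite ge0_integral_pushforward// => x /set_mem/F0.
Qed.

End translation.

Section steinhaus.
Context {R : realType}.
Local Notation leb := (@lebesgue_measure R).
Local Open Scope ereal_scope.

Lemma lebesgue_density_point (A : set R) : measurable A -> 0 < leb A ->
  exists a : R, \forall r \near 0%R^'+, (3 * r / 2)%:E < leb (A `&` ball a r).
Proof.
move=> mA A0; have [N [mN N0 densN]] := lebesgue_density mA.
have [a [Aa Na]] : exists a, A a /\ ~ N a.
  apply: contrapT => noa; suff : leb A <= leb N by rewrite N0 leNgt A0.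
  by apply: le_measure; rewrite ?inE// => x Ax; apply: contrapT => Nx; apply: noa; exists x.
have : leb (A `&` ball a r) * (leb (ball a r))^-1 @[r --> 0%R^'+] --> (\1_A a)%:E.
  by apply: contrapT => /densN.
have lt34 : (3 / 4)%:E < 1%:E :> \bar R by rewrite lte_fin; lra.
rewrite indicE mem_set// => /(_ _ (open_ereal_gt' lt34)) ratio.
exists a; near=> r.
have r0 : (0 < r)%R by near: r; exact: nbhs_right_gt.
have : (3 / 4)%:E < leb (A `&` ball a r) * (leb (ball a r))^-1 by near: r; exact: ratio.
rewrite lebesgue_measure_ball ?ltW// inver gt_eqF ?mulrn_wgt0//.
by rewrite lte_pdivlMr ?mulrn_wgt0// -EFinM mulr2n (_ : 3 / 4 * (r + r) = 3 * r / 2)%R//; lra.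
Unshelve. all: by end_near.
Qed.

Lemma exists_rat_translate_meet (A B : set R) : measurable A -> measurable B ->
  0 < leb A -> 0 < leb B -> exists (q : rat) (x : R), A x /\ B (x - ratr q)%R.
Proof.
move=> mA mB A0 B0.
have [a densA] := lebesgue_density_point _ mA A0.
have [b densB] := lebesgue_density_point _ mB B0.
have [r [r0 [Ar Br]]] := filter_ex (filterI (nbhs_right_gt 0%R) (filterI densA densB)).
have [q] : exists q : rat, ratr q \in `](a - b - r / 4)%R, (a - b + r / 4)%R[.
  by apply: rat_in_itvoo; lra.
rewrite in_itv/= => /andP[qlo qhi]; exists q; apply: contrapT => nomeet.
(* A and B translated by q fill more than 3/4 of the balls of radius r around a
   and around b + q, which both lie in the ball of radius 5r/4 around a: they
   cannot be disjoint. *)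
pose S2 := (fun x => x + - ratr q)%R @^-1` (B `&` ball b r).
have mBr : measurable (B `&` ball b r) by exact: measurableI mB (measurable_ball _ _).
have mS2 : measurable S2 by rewrite -[S2]setTI; exact: measurable_addr.
have disj : A `&` ball a r `&` S2 = set0.
  by apply/seteqP; split=> // x [[Ax _] [Bx _]]; apply: nomeet; exists x.
have sub : A `&` ball a r `|` S2 `<=` ball a (5 * r / 4)%R.
  move=> x; rewrite /S2 !ball_itv/= !in_itv/=.
  by case=> [[_ /andP[? ?]]|[_ /andP[? ?]]]; apply/andP; split; lra.
have mAr : measurable (A `&` ball a r) by exact: measurableI mA (measurable_ball _ _).
have measS2 : leb S2 = leb (B `&` ball b r) by exact: lebesgue_measure_addr.
have measU : leb (A `&` ball a r `|` S2) = leb (A `&` ball a r) + leb S2.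
  by rewrite measureU.
have : leb (A `&` ball a r `|` S2) <= leb (ball a (5 * r / 4)%R).
  by apply: le_measure => //; rewrite inE; [exact: measurableU | exact: measurable_ball].
rewrite measU measS2 lebesgue_measure_ball; last lra.
move=> /(lt_le_trans (lteD Ar Br)); rewrite -EFinD lte_fin -mulr_natr; lra.
Qed.

End steinhaus.

Section greedy_transport.
Context {R : realType}.
Variables (f g : R -> R) (s : nat -> R).

Fixpoint residue n : (R -> R) * (R -> R) :=
  if n is m.+1 then
    let: (F, G) := residue m in
    let t x := Num.min (F x) (G (x - s m)) in
    (fun x => F x - t x, fun y => G y - t (y + s m))
  else (f, g).

Definition restf n := (residue n).1.
Definition restg n := (residue n).2.
Definition transfer n x := Num.min (restf n x) (restg n (x - s n)).

Lemma restfS n x : restf n.+1 x = restf n x - transfer n x.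
Proof. by rewrite /transfer /restf /restg /=; case: residue. Qed.

Lemma restgS n y : restg n.+1 y = restg n y - transfer n (y + s n).
Proof. by rewrite /transfer /restf /restg /=; case: residue => F G /=; rewrite addrK. Qed.

Lemma restf_restg_eq0 n x : restf n.+1 x = 0 \/ restg n.+1 (x - s n) = 0.
Proof. by rewrite restfS restgS subrK /transfer; case: leP; [left|right]; rewrite subrr. Qed.

Lemma f_restf_transfer n x : f x = restf n x + \sum_(0 <= k < n) transfer k x.
Proof.
elim: n => [|n IH]; first by rewrite big_geq ?addr0.
by rewrite big_nat_recr//= restfS {1}IH; lra.
Qed.

Lemma g_restg_transfer n y : g y = restg n y + \sum_(0 <= k < n) transfer k (y + s k).
Proof.
elim: n => [|n IH]; first by rewrite big_geq ?addr0.
by rewrite big_nat_recr//= restgS {1}IH; lra.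
Qed.

Hypotheses (f0 : forall x, 0 <= f x) (g0 : forall y, 0 <= g y).

Lemma residue_ge0 n : (forall x, 0 <= restf n x) /\ (forall y, 0 <= restg n y).
Proof.
elim: n => [//|n [F0 G0]]; split=> [x|y].
  by rewrite restfS /transfer subr_ge0 ge_min lexx.
by rewrite restgS /transfer addrK subr_ge0 ge_min lexx orbT.
Qed.

Lemma restf_ge0 n x : 0 <= restf n x. Proof. exact: (residue_ge0 n).1. Qed.
Lemma restg_ge0 n y : 0 <= restg n y. Proof. exact: (residue_ge0 n).2. Qed.
Lemma transfer_ge0 n x : 0 <= transfer n x.
Proof. by rewrite le_min restf_ge0 restg_ge0. Qed.

Hypotheses (mf : measurable_fun [set: R] f) (mg : measurable_fun [set: R] g).

Lemma measurable_residue n :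
  measurable_fun [set: R] (restf n) /\ measurable_fun [set: R] (restg n).
Proof.
elim: n => [//|n [mF mG]].
have mt : measurable_fun [set: R] (transfer n).
  by apply: measurable_minr => //; exact: measurableT_comp mG (measurable_addr _).
rewrite (funext (restfS n)) (funext (restgS n)); split; apply: measurable_funB => //.
exact: measurableT_comp mt (measurable_addr _).
Qed.

Lemma measurable_transfer n : measurable_fun [set: R] (transfer n).
Proof.
have [mF mG] := measurable_residue n.
by apply: measurable_minr => //; exact: measurableT_comp mG (measurable_addr _).
Qed.

Lemma measurable_transfer_addr n : measurable_fun [set: R] (fun y => transfer n (y + s n)).
Proof. exact: measurableT_comp (measurable_transfer n) (measurable_addr _). Qed.

Local Notation leb := (@lebesgue_measure R).
Local Open Scope ereal_scope.

Definition sent x := \sum_(k <oo) (transfer k x)%:E.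
Definition received y := \sum_(k <oo) (transfer k (y + s k))%:E.

Lemma sent_partial n x : \sum_(0 <= k < n) (transfer k x)%:E = (f x - restf n x)%:E.
Proof. by rewrite sumEFin; congr EFin; have := f_restf_transfer n x; lra. Qed.

Lemma received_partial n y :
  \sum_(0 <= k < n) (transfer k (y + s k))%:E = (g y - restg n y)%:E.
Proof. by rewrite sumEFin; congr EFin; have := g_restg_transfer n y; lra. Qed.

Lemma sent_ge0 x : 0 <= sent x.
Proof. by apply: nneseries_ge0 => k _ _ /=; rewrite lee_fin transfer_ge0. Qed.

Lemma received_ge0 y : 0 <= received y.
Proof. by apply: nneseries_ge0 => k _ _ /=; rewrite lee_fin transfer_ge0. Qed.

Lemma sent_le x : sent x <= (f x)%:E.
Proof.
apply: lime_le; first by apply: is_cvg_nneseries => k _ _ /=; rewrite lee_fin transfer_ge0.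
by apply: nearW => n; rewrite sent_partial lee_fin lerBlDr lerDl restf_ge0.
Qed.

Lemma received_le y : received y <= (g y)%:E.
Proof.
apply: lime_le; first by apply: is_cvg_nneseries => k _ _ /=; rewrite lee_fin transfer_ge0.
by apply: nearW => n; rewrite received_partial lee_fin lerBlDr lerDl restg_ge0.
Qed.

Lemma fin_num_sent x : sent x \is a fin_num.
Proof. by rewrite ge0_fin_numE ?sent_ge0// (le_lt_trans (sent_le x)) ?ltry. Qed.

Lemma fin_num_received y : received y \is a fin_num.
Proof. by rewrite ge0_fin_numE ?received_ge0// (le_lt_trans (received_le y)) ?ltry. Qed.

Lemma measurable_sent : measurable_fun [set: R] sent.
Proof.
apply: (@ge0_emeasurable_sum _ _ _ [set: R] (fun k x => (transfer k x)%:E) xpredT) => //.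
  by move=> k x _ _; rewrite lee_fin; exact: transfer_ge0.
by move=> k _; apply/measurable_EFinP; exact: measurable_transfer.
Qed.

Lemma measurable_received : measurable_fun [set: R] received.
Proof.
apply: (@ge0_emeasurable_sum _ _ _ [set: R]
  (fun k y => (transfer k (y + s k))%:E) xpredT) => //.
  by move=> k y _ _; rewrite lee_fin; exact: transfer_ge0.
by move=> k _; apply/measurable_EFinP; exact: measurable_transfer_addr.
Qed.

Definition leftf x := (f x - fine (sent x))%R.
Definition leftg y := (g y - fine (received y))%R.

Lemma leftf_le_restf n x : (leftf x <= restf n x)%R.
Proof.
have ge0 k : 0 <= (transfer k x)%:E by rewrite lee_fin transfer_ge0.
have := @nneseries_lim_ge _ _ xpredT 0 n (fun k _ _ => ge0 k).
rewrite sent_partial -/(sent x) -(fineK (fin_num_sent x)) lee_fin /leftf; lra.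
Qed.

Lemma leftg_le_restg n y : (leftg y <= restg n y)%R.
Proof.
have ge0 k : 0 <= (transfer k (y + s k))%:E by rewrite lee_fin transfer_ge0.
have := @nneseries_lim_ge _ _ xpredT 0 n (fun k _ _ => ge0 k).
rewrite received_partial -/(received y) -(fineK (fin_num_received y)) lee_fin /leftg; lra.
Qed.

Lemma leftf_ge0 x : (0 <= leftf x)%R.
Proof. by have := sent_le x; rewrite -(fineK (fin_num_sent x)) lee_fin /leftf subr_ge0. Qed.

Lemma leftg_ge0 y : (0 <= leftg y)%R.
Proof.
by have := received_le y; rewrite -(fineK (fin_num_received y)) lee_fin /leftg subr_ge0.
Qed.

Lemma measurable_leftf : measurable_fun [set: R] leftf.
Proof.
apply: measurable_funB => //; apply: measurableT_comp measurable_sent.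
exact: fine_measurable.
Qed.

Lemma measurable_leftg : measurable_fun [set: R] leftg.
Proof.
apply: measurable_funB => //; apply: measurableT_comp measurable_received.
exact: fine_measurable.
Qed.

Lemma integral_f_leftf_sent A : measurable A ->
  \int[leb]_(x in A) (f x)%:E =
  \int[leb]_(x in A) (leftf x)%:E + \int[leb]_(x in A) sent x.
Proof.
move=> mA; rewrite -ge0_integralD//.
- by apply: eq_integral => x _; rewrite -[sent x]fineK ?fin_num_sent// -EFinD subrK.
- by move=> x _; rewrite lee_fin leftf_ge0.
- by apply/measurable_EFinP; apply: measurable_funTS; exact: measurable_leftf.
- by move=> x _; exact: sent_ge0.
- by apply: measurable_funTS; exact: measurable_sent.
Qed.

Lemma integral_g_leftg_received A : measurable A ->
  \int[leb]_(y in A) (g y)%:E =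
  \int[leb]_(y in A) (leftg y)%:E + \int[leb]_(y in A) received y.
Proof.
move=> mA; rewrite -ge0_integralD//.
- by apply: eq_integral => y _; rewrite -[received y]fineK ?fin_num_received// -EFinD subrK.
- by move=> y _; rewrite lee_fin leftg_ge0.
- by apply/measurable_EFinP; apply: measurable_funTS; exact: measurable_leftg.
- by move=> y _; exact: received_ge0.
- by apply: measurable_funTS; exact: measurable_received.
Qed.

Lemma integral_sent A : measurable A ->
  \int[leb]_(x in A) sent x = \sum_(k <oo) \int[leb]_(x in A) (transfer k x)%:E.
Proof.
move=> mA; rewrite integral_nneseries// => [k|k x _].
  by apply/measurable_EFinP; apply: measurable_funTS; exact: measurable_transfer.
by rewrite lee_fin transfer_ge0.
Qed.

Lemma integral_received A : measurable A ->
  \int[leb]_(y in A) received y =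
  \sum_(k <oo) \int[leb]_(y in A) (transfer k (y + s k))%:E.
Proof.
move=> mA; rewrite integral_nneseries// => [k|k y _].
  by apply/measurable_EFinP; apply: measurable_funTS; exact: measurable_transfer_addr.
by rewrite lee_fin transfer_ge0.
Qed.

Lemma integral_sent_received : \int[leb]_x sent x = \int[leb]_y received y.
Proof.
rewrite integral_sent// integral_received//; apply: eq_eseriesr => k _.
rewrite -(ge0_integral_addr (s k) setT (fun x => (transfer k x)%:E)) ?preimage_setT//.
- by apply/measurable_EFinP; exact: measurable_transfer.
- by move=> x _; rewrite lee_fin transfer_ge0.
Qed.

Hypothesis s_meet : forall A B : set R, measurable A -> measurable B ->
  0 < leb A -> 0 < leb B -> exists n x, A x /\ B (x - s n)%R.
Hypotheses (intf : \int[leb]_x (f x)%:E = 1) (intg : \int[leb]_x (g x)%:E = 1).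

Lemma integral_leftf_leftg : \int[leb]_x (leftf x)%:E = \int[leb]_x (leftg x)%:E.
Proof.
have leftg0 : 0 <= \int[leb]_x (leftg x)%:E.
  by apply: integral_ge0 => x _; rewrite lee_fin leftg_ge0.
have ef := integral_f_leftf_sent _ measurableT.
have eg := integral_g_leftg_received _ measurableT.
rewrite intf integral_sent_received in ef; rewrite intg in eg.
have fin : \int[leb]_x received x \is a fin_num.
  rewrite ge0_fin_numE; last by apply: integral_ge0 => x _; exact: received_ge0.
  by rewrite (le_lt_trans (leeDr _ leftg0)) -?eg ?ltry.
by rewrite -[LHS](addeK _ fin) -ef -[RHS](addeK _ fin) -eg.
Qed.

Lemma integral_leftf_eq0 : \int[leb]_x (leftf x)%:E = 0.
Proof.
apply/eqP; rewrite eq_le integral_ge0 ?andbT => [|x _]; last by rewrite lee_fin leftf_ge0.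
rewrite leNgt; apply/negP => leftf_gt0.
have leftg_gt0 : 0 < \int[leb]_x (leftg x)%:E by rewrite -integral_leftf_leftg.
have [n [x [/= fx gx]]] := s_meet _ _ (measurable_set_gt0 _ measurable_leftf)
  (measurable_set_gt0 _ measurable_leftg)
  (integral_gt0_measure_gt0 leb _ measurable_leftf leftf_ge0 leftf_gt0)
  (integral_gt0_measure_gt0 leb _ measurable_leftg leftg_ge0 leftg_gt0).
have := leftf_le_restf n.+1 x; have := leftg_le_restg n.+1 (x - s n).
by case: (restf_restg_eq0 n x) => ->; lra.
Qed.

Lemma integral_leftg_eq0 : \int[leb]_x (leftg x)%:E = 0.
Proof. by rewrite -integral_leftf_leftg integral_leftf_eq0. Qed.

Lemma integral_sent_f A : measurable A ->
  \int[leb]_(x in A) sent x = \int[leb]_(x in A) (f x)%:E.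
Proof.
move=> mA; rewrite integral_f_leftf_sent//.
rewrite (ge0_integral_eq0_restrict leb (fun x => (leftf x)%:E)) ?add0e//.
- by apply/measurable_EFinP; exact: measurable_leftf.
- by move=> x; rewrite lee_fin leftf_ge0.
- exact: integral_leftf_eq0.
Qed.

Lemma integral_received_g A : measurable A ->
  \int[leb]_(y in A) received y = \int[leb]_(y in A) (g y)%:E.
Proof.
move=> mA; rewrite integral_g_leftg_received//.
rewrite (ge0_integral_eq0_restrict leb (fun y => (leftg y)%:E)) ?add0e//.
- by apply/measurable_EFinP; exact: measurable_leftg.
- by move=> y; rewrite lee_fin leftg_ge0.
- exact: integral_leftg_eq0.
Qed.

Local Notation T := (measurableTypeR R).

Definition transfer_measure k (A : set T) := \int[leb]_(x in A) (transfer k x)%:E.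

Let transfer_measure0 k : transfer_measure k set0 = 0.
Proof. exact: integral_set0. Qed.

Let transfer_measure_ge0 k A : 0 <= transfer_measure k A.
Proof. by apply: integral_ge0 => x _; rewrite lee_fin transfer_ge0. Qed.

Let transfer_measure_sigma_additive k : semi_sigma_additive (transfer_measure k).
Proof.
apply: semi_sigma_additive_nng_induced; last by move=> x; rewrite lee_fin transfer_ge0.
by apply/measurable_EFinP; exact: measurable_transfer.
Qed.

HB.instance Definition _ k := isMeasure.Build _ _ _ (transfer_measure k)
  (transfer_measure0 k) (transfer_measure_ge0 k) (transfer_measure_sigma_additive k).

Definition shift_graph k (x : T) : T * T := (x, x - s k)%R.

Lemma measurable_shift_graph k : measurable_fun [set: T] (shift_graph k).
Proof. by apply: measurable_fun_pair => //; exact: (measurable_addr (- s k)). Qed.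

Definition transfer_plan k := pushforward (transfer_measure k) (shift_graph k).

Let transfer_plan0 k : transfer_plan k set0 = 0.
Proof. exact: transfer_measure0. Qed.

Let transfer_plan_ge0 k A : 0 <= transfer_plan k A.
Proof. exact: transfer_measure_ge0. Qed.

Let transfer_plan_sigma_additive k : semi_sigma_additive (transfer_plan k).
Proof.
have := @measure_semi_sigma_additive _ _ _ (pushforward (transfer_measure k) (shift_graph k)).
by apply; exact: measurable_shift_graph.
Qed.

HB.instance Definition _ k := isMeasure.Build _ _ _ (transfer_plan k)
  (transfer_plan0 k) (transfer_plan_ge0 k) (transfer_plan_sigma_additive k).

Definition coupling := mseries transfer_plan 0.
HB.instance Definition _ := Measure.copy coupling (mseries transfer_plan 0).

Lemma coupling_fst A : measurable A ->
  coupling (fst @^-1` A) = \int[leb]_(x in A) (f x)%:E.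
Proof. by move=> mA; rewrite -integral_sent_f// integral_sent. Qed.

Lemma coupling_snd A : measurable A ->
  coupling (snd @^-1` A) = \int[leb]_(y in A) (g y)%:E.
Proof.
move=> mA; rewrite -integral_received_g// integral_received//; apply: eq_eseriesr => k _.
rewrite -(ge0_integral_addr (- s k) A (fun y => (transfer k (y + s k))%:E))//.
- by apply: eq_integral => x _; rewrite subrK.
- by apply/measurable_EFinP; apply: measurable_funTS; exact: measurable_transfer_addr.
- by move=> y _; rewrite lee_fin transfer_ge0.
Qed.

Lemma coupling_setT : coupling setT = 1.
Proof. by rewrite -(preimage_setT fst) coupling_fst. Qed.

HB.instance Definition _ := Measure_isProbability.Build _ _ _ coupling coupling_setT.

Lemma coupling_shift_support : {ae coupling, forall w, exists n, w.1 - w.2 = s n}%R.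
Proof.
pose D (w : T * T) := (w.1 - w.2)%R.
have mD : measurable_fun [set: T * T] D.
  exact: measurable_funB measurable_fst measurable_snd.
exists (~` \bigcup_n (D @^-1` [set s n])); split.
- apply/measurableC/bigcupT_measurable => n; rewrite -[X in measurable X]setTI.
  exact: mD (measurable_set1 _).
- apply: eseries0 => k _ _; rewrite -(transfer_measure0 k); congr (transfer_measure k _).
  by apply/seteqP; split => // x /=; apply; exists k => //; rewrite /D /= opprB addrC subrK.
- by move=> w /= nw [n _ Dw]; apply: nw; exists n.
Qed.

Lemma exists_shift_coupling :
  exists (P : probability (T * T)%type R) (X Y : {RV P >-> T}),
  [/\ forall A, measurable A -> distribution P X A = \int[leb]_(x in A) (f x)%:E,
      forall A, measurable A -> distribution P Y A = \int[leb]_(y in A) (g y)%:E &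
      {ae P, forall w, exists n, X w - Y w = s n}%R].
Proof.
pose X : {mfun (T * T)%type >-> T} :=
  HB.pack (@fst T T) (isMeasurableFun.Build _ _ _ _ (@fst T T) measurable_fst).
pose Y : {mfun (T * T)%type >-> T} :=
  HB.pack (@snd T T) (isMeasurableFun.Build _ _ _ _ (@snd T T) measurable_snd).
exists coupling, X, Y; split; [exact: coupling_fst | exact: coupling_snd |].
exact: coupling_shift_support.
Qed.

End greedy_transport.

Lemma probability_lebesgue_density {R : realType} (mu : probability (measurableTypeR R) R) :
  mu `<< (@lebesgue_measure R) ->
  exists f : R -> R, [/\ measurable_fun [set: R] f, forall x, (0 <= f x)%R,
    (\int[lebesgue_measure]_x (f x)%:E = 1)%E &
    forall A, measurable A -> mu A = (\int[lebesgue_measure]_(x in A) (f x)%:E)%E].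
Proof.
move=> mu_leb; pose F := Radon_Nikodym_SigmaFinite.f mu (@lebesgue_measure R).
have FE x : F x = (fine (F x))%:E.
  by rewrite fineK//; exact: Radon_Nikodym_SigmaFinite.f_fin_num.
have muE A : measurable A -> mu A = (\int[lebesgue_measure]_(x in A) (fine (F x))%:E)%E.
  move=> mA; rewrite (Radon_Nikodym_SigmaFinite.f_integral mu_leb)//.
  by apply: eq_integral => x _; rewrite -FE.
exists (fine \o F); split => //.
- apply: measurableT_comp => //.
  exact: measurable_int (Radon_Nikodym_SigmaFinite.f_integrable mu_leb).
- by move=> x; apply: fine_ge0; exact: Radon_Nikodym_SigmaFinite.f_ge0.
- by rewrite -muE// probability_setT.
Qed.

Theorem corollary8p6 (R : realType)
    (mu nu : probability (measurableTypeR R) R)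
    (hmu : mu `<< (@lebesgue_measure R))
    (hnu : nu `<< (@lebesgue_measure R)) :
  exists (d : measure_display) (Omega : measurableType d)
         (P : probability Omega R) (X Y : {RV P >-> measurableTypeR R}),
    (forall A : set (measurableTypeR R), measurable A ->
       distribution P X A = mu A) /\
    (forall A : set (measurableTypeR R), measurable A ->
       distribution P Y A = nu A) /\
    {ae P, forall w, exists q : rat, X w - Y w = ratr q}.
Proof.
have [f [mf f0 intf muE]] := probability_lebesgue_density _ hmu.
have [g [mg g0 intg nuE]] := probability_lebesgue_density _ hnu.
pose s n : R := ratr (odflt 0%Q (unpickle n)).
have s_meet (A B : set R) : measurable A -> measurable B ->
    (0 < lebesgue_measure A)%E -> (0 < lebesgue_measure B)%E ->
    exists n x, A x /\ B (x - s n).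
  move=> mA mB A0 B0; have [q [x [Ax Bx]]] := exists_rat_translate_meet _ _ mA mB A0 B0.
  by exists (pickle q), x; rewrite /s pickleK.
have [P [X [Y [PX PY XY]]]] :=
  exists_shift_coupling _ _ _ f0 g0 mf mg s_meet intf intg.
exists _, _, P, X, Y; split; [|split].
- by move=> A mA; rewrite PX ?muE.
- by move=> A mA; rewrite PY ?nuE.
- by apply: filterS XY => w [n ->]; exists (odflt 0%Q (unpickle n)).
Qed.
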